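(* Consider a network as described in the context that is cooperative and large enough. Then for every initial state $\mathbf x(0)$ with $S_i(x_i(0))\in[0,\theta_i)$ for all $i$, the grand coalition is exhibited infinitely many times in the future. That is, there are infinitely many spiking instants $t_n$ with $I(t_n)=\{1,\dots,m\}$.
   Context: Network model. Fix an integer $m\ge 2$ (the number of units, or cells). For each $i\in\{1,\dots,m\}$ the following data are given. - $X_i$ is a compact finite-dimensional smooth manifold. - $f_i$ is a continuous vector field on $X_i$. - $S_i:X_i\to\mathbb R$ is a $C^1$ function, called the satisfaction level. - $\theta_i>0$ is a constant, called the goal. These are required to satisfy: there is $v_i>0$ with $\nabla S_i(x)\cdot f_i(x)>v_i$ for every $x\in X_i$ with $S_i(x)<\theta_i$. Real interaction weights $\Delta_{ij}$ are given for $i\ne j$. The global state $\mathbf x(t)=(x_1(t),\dots,x_m(t))\in\prod_i X_i$, $t\ge 0$, evolves as follows. Spiking instants $0\le t_0<t_1<\cdots$ are the instants at which at least one cell spikes. Between consecutive spiking instants each $x_i$ evolves independently by $dx_i/dt=f_i(x_i)$. At an instant $t_n$, write $S_j(x_j(t_n^-))=\lim_{t\to t_n^-}S_j(x_j(t))$. The coalition is $I(t_n)=\bigcup_{p\ge 0}I_p(t_n)$, where: - $I_0(t_n)$ is the set of cells $i$ with $S_i(x_i(t_n^-))\ge\theta_i$; - for $p\ge1$, $I_p(t_n)$ is the set of cells $j\notin\bigcup_{k<p}I_k(t_n)$ with $S_j(x_j(t_n^-))+\sum_{k<p}\sum_{i\in I_k(t_n)}\Delta_{ij}\ge\theta_j$.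 The spiking instants are exactly the instants with $I_0(t_n)\neq\emptyset$, and the cells in $I(t_n)$ are said to spike at $t_n$. At $t_n$ the state jumps as follows: - for $j\in I(t_n)$, $x_j(t_n)$ is a point with $S_j(x_j(t_n))=0$; - for $j\notin I(t_n)$, $x_j(t_n)$ is a point with $S_j(x_j(t_n))=S_j(x_j(t_n^-))+\sum_{i\in I(t_n),\,i\ne j}\Delta_{ij}$. Initial states are assumed to satisfy $S_i(x_i(0))\in[0,\theta_i)$ for all $i$. The network is cooperative if $\Delta_{ij}\ge 0$ for all $i\ne j$. A cooperative network is large enough if $\sqrt m\ge 1+\frac{\max_i\theta_i}{\min_{i\ne j}\Delta_{ij}}$; in particular this requires $\Delta_{ij}>0$ for all $i\ne j$. The grand coalition is exhibited at $t_n$ if $I(t_n)=\{1,\dots,m\}$. *)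

From Stdlib Require Import Bool Reals Lra List Arith ClassicalDescription.
Import ListNotations.
Open Scope R_scope.
Open Scope bool_scope.

Definition rsum (n : nat) (f : nat -> R) : R :=
  fold_right Rplus 0 (map f (seq 0 n)).

Definition Rleb (a b : R) : bool := if Rle_dec a b then true else false.

(* max_i theta_i over i < m (meaningful for m >= 1) *)
Definition max_theta (m : nat) (theta : nat -> R) : R :=
  fold_right Rmax (theta 0%nat) (map theta (seq 0 m)).

(* min_{i <> j} Delta_ij over i, j < m (meaningful for m >= 2) *)
Definition min_Delta (m : nat) (Delta : nat -> nat -> R) : R :=
  fold_right Rmin (Delta 0%nat 1%nat)
    (flat_map (fun i => map (fun j => Delta i j)
                 (filter (fun j => negb (Nat.eqb j i)) (seq 0 m)))
              (seq 0 m)).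

Definition cooperative (m : nat) (Delta : nat -> nat -> R) : Prop :=
  forall i j, (i < m)%nat -> (j < m)%nat -> i <> j -> 0 <= Delta i j.

(* "large enough": sqrt m >= 1 + max theta / min Delta, which in particular
   requires min Delta > 0 (stated explicitly, as in the paper). *)
Definition large_enough (m : nat) (theta : nat -> R) (Delta : nat -> nat -> R) : Prop :=
  0 < min_Delta m Delta /\
  sqrt (INR m) >= 1 + max_theta m theta / min_Delta m Delta.

(* Layers I_p of the coalition, given the pre-spike satisfaction levels
   l j = S_j(x_j(t_n^-)).  layer p j = true  iff  j \in I_p(t_n). *)
Fixpoint layers (m : nat) (theta : nat -> R) (Delta : nat -> nat -> R)
         (l : nat -> R) (p : nat) : list (nat -> bool) :=
  match p with
  | O => [fun j => Nat.ltb j m && Rleb (theta j) (l j)]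
  | S q =>
      let prev := layers m theta Delta l q in   (* [I_0; ...; I_q] *)
      prev ++
      [fun j =>
         Nat.ltb j m
         && negb (existsb (fun Ik : nat -> bool => Ik j) prev)
         && Rleb (theta j)
              (l j + fold_right Rplus 0
                       (map (fun Ik : nat -> bool => rsum m (fun i => if Ik i then Delta i j else 0))
                            prev))]
  end.

Definition layer (m : nat) (theta : nat -> R) (Delta : nat -> nat -> R)
         (l : nat -> R) (p j : nat) : bool :=
  nth p (layers m theta Delta l p) (fun _ => false) j.

Definition in_coalition (m : nat) (theta : nat -> R) (Delta : nat -> nat -> R)
           (l : nat -> R) (j : nat) : Prop :=
  exists p, layer m theta Delta l p j = true.

Definition left_limit (f : R -> R) (t l : R) : Prop :=
  forall eps, eps > 0 -> exists d, d > 0 /\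
    forall u, t - d < u < t -> Rabs (f u - l) < eps.

Definition right_continuous (f : R -> R) (a : R) : Prop :=
  forall eps, eps > 0 -> exists d, d > 0 /\
    forall u, a < u < a + d -> Rabs (f u - f a) < eps.

Definition pre_levels (m : nat) (s : nat -> R -> R) (t : R) (l : nat -> R) : Prop :=
  forall i, (i < m)%nat -> left_limit (s i) t (l i).

Definition jump_rule (m : nat) (theta : nat -> R) (Delta : nat -> nat -> R)
           (l : nat -> R) (s_after : nat -> R) : Prop :=
  forall j, (j < m)%nat ->
    (in_coalition m theta Delta l j -> s_after j = 0) /\
    (~ in_coalition m theta Delta l j ->
       s_after j = l j + rsum m (fun i =>
          if excluded_middle_informative (in_coalition m theta Delta l i /\ i <> j)
          then Delta i j else 0)).

(* An evolution of the network (as seen through the satisfaction levels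
   s i t = S_i(x_i(t)), with L_i = grad S_i . f_i the Lie derivative). *)
Definition is_evolution (m : nat) (X : nat -> Type)
    (S : forall i, X i -> R) (L : forall i, X i -> R)
    (theta : nat -> R) (Delta : nat -> nat -> R)
    (x : forall i, R -> X i) (spk : R -> Prop) : Prop :=
  let s := fun i t => S i (x i t) in
  (* spiking instants are positive and form a discrete sequence t0 < t1 < ... *)
  (forall t, spk t -> 0 < t) /\
  (forall T, exists ts : list R, forall t, spk t -> t <= T -> In t ts) /\
  (* free evolution dx_i/dt = f_i(x_i) between consecutive spiking instants,
     starting from the (post-jump) state at the left end *)
  (forall a b i, 0 <= a -> a < b -> (i < m)%nat ->
     (forall t, a < t < b -> ~ spk t) ->
     right_continuous (s i) a /\
     (forall t, a < t < b -> derivable_pt_lim (s i) t (L i (x i t)))) /\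
  (forall t i, 0 < t -> (i < m)%nat -> exists li, left_limit (s i) t li) /\
  (* spiking instants are exactly the instants with I_0 nonempty *)
  (forall t l, 0 < t -> pre_levels m s t l ->
     (spk t <-> exists i, (i < m)%nat /\ theta i <= l i)) /\
  (forall t l, spk t -> pre_levels m s t l ->
     jump_rule m theta Delta l (fun j => s j t)).

From Stdlib Require Import Reals Lra List Lia ClassicalDescription Classical.
From Stdlib Require ClassicalEpsilon.
Open Scope R_scope.

(** Between spikes every level rises at speed at least [v i] and stays below
    its goal, so spikes never stop, and the pre-spike levels all lie in
    [[0, theta i]].  Take as potential the sum of the pre-spike levels.  If at
    a spike the coalition has [c] members, with [1 <= c < m], then each member
    loses at most [max theta] and each of the [m - c] others gains at least
    [c * min Delta]; since an outsider does not reach its goal, [c * min Delta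
    <= max theta].  Hence the potential grows by at least
    [c ((m - c) min Delta - max theta) >= m min Delta - 2 max theta], which is
    positive because [m > 2 max theta / min Delta] for a large enough network.
    The potential is bounded by [sum theta], so the grand coalition must
    recur. *)

Lemma list_min_witness (l : list R) (P : R -> Prop) :
  (exists x, In x l /\ P x) ->
  exists y, In y l /\ P y /\ forall z, In z l -> P z -> y <= z.
Proof.
  induction l as [|a l IH]; intros [x [Hx HP]]; [destruct Hx|].
  destruct (classic (exists x, In x l /\ P x)) as [Hex|Hn].
  - destruct (IH Hex) as [y [Hy [HPy Hmin]]].
    destruct (classic (P a /\ a <= y)) as [[Pa Hay]|Hna].
    + exists a; split; [left; auto|split; auto].
      intros z [<-|Hz] Pz; [lra|]. specialize (Hmin z Hz Pz); lra.
    + exists y; split; [right; auto|split; auto].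
      intros z [<-|Hz] Pz; [|auto]. apply Rnot_lt_le; intro; apply Hna; split; auto; lra.
  - destruct Hx as [<-|Hx]; [|exfalso; apply Hn; eauto].
    exists a; split; [left; auto|split; auto].
    intros z [<-|Hz] Pz; [lra|exfalso; apply Hn; eauto].
Qed.

Lemma list_max_witness (l : list R) (P : R -> Prop) :
  (exists x, In x l /\ P x) ->
  exists y, In y l /\ P y /\ forall z, In z l -> P z -> z <= y.
Proof.
  intros [x [Hx Px]].
  destruct (list_min_witness (map Ropp l) (fun u => P (- u))) as [y [Hy [Py Hmin]]].
  { exists (- x). rewrite Ropp_involutive. split; [apply in_map|]; auto. }
  apply in_map_iff in Hy. destruct Hy as [y' [<- Hy']].
  rewrite Ropp_involutive in Py. exists y'. split; [|split]; auto.
  intros z Hz Pz. assert (H := Hmin (- z) (in_map _ _ _ Hz)).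
  rewrite Ropp_involutive in H. specialize (H Pz). lra.
Qed.

Lemma rsum_S n f : rsum (S n) f = rsum n f + f n.
Proof.
  unfold rsum. rewrite seq_S, map_app, fold_right_app. simpl.
  generalize (map f (seq 0 n)). intro l. induction l; simpl; lra.
Qed.

Lemma rsum_le n f g : (forall i, (i < n)%nat -> f i <= g i) -> rsum n f <= rsum n g.
Proof.
  induction n as [|n IH]; intros H; [unfold rsum; simpl; lra|].
  rewrite !rsum_S. assert (f n <= g n) by (apply H; lia).
  assert (rsum n f <= rsum n g) by (apply IH; intros; apply H; lia). lra.
Qed.

Lemma rsum_plus n f g : rsum n (fun i => f i + g i) = rsum n f + rsum n g.
Proof. induction n; [unfold rsum; simpl; lra|]. rewrite !rsum_S, IHn. lra. Qed.

Lemma rsum_const n a : rsum n (fun _ => a) = a * INR n.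
Proof. induction n; [unfold rsum; simpl; lra|]. rewrite !rsum_S, IHn, S_INR. lra. Qed.

Definition indicator (P : nat -> Prop) (i : nat) : R :=
  if excluded_middle_informative (P i) then 1 else 0.

Lemma rsum_if n (P : nat -> Prop) A B :
  rsum n (fun j => if excluded_middle_informative (P j) then A else B)
  = A * rsum n (indicator P) + B * (INR n - rsum n (indicator P)).
Proof.
  induction n; [unfold rsum; simpl; lra|].
  rewrite !rsum_S, IHn, S_INR. unfold indicator.
  destruct (excluded_middle_informative (P n)); lra.
Qed.

Lemma rsum_indicator_nonneg n (P : nat -> Prop) : 0 <= rsum n (indicator P).
Proof.
  replace 0 with (rsum n (fun _ => 0)) by (rewrite rsum_const; lra).
  apply rsum_le. intros i _. unfold indicator.
  destruct (excluded_middle_informative (P i)); lra.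
Qed.

Lemma rsum_indicator_ge1 n (P : nat -> Prop) :
  (exists i, (i < n)%nat /\ P i) -> 1 <= rsum n (indicator P).
Proof.
  induction n as [|n IH]; intros [i [Hi Pi]]; [lia|].
  rewrite rsum_S. unfold indicator at 2.
  assert (H0 := rsum_indicator_nonneg n P).
  destruct (Nat.eq_dec i n) as [->|Hne].
  - destruct (excluded_middle_informative (P n)); [lra|contradiction].
  - assert (1 <= rsum n (indicator P)) by (apply IH; exists i; split; auto; lia).
    destruct (excluded_middle_informative (P n)); lra.
Qed.

Lemma fold_right_Rmax_ge (l : list R) a x : In x l -> x <= fold_right Rmax a l.
Proof.
  induction l as [|b l IH]; simpl; [contradiction|intros [<-|H]].
  - apply Rmax_l.
  - eapply Rle_trans; [apply IH; auto|apply Rmax_r].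
Qed.

Lemma fold_right_Rmin_le (l : list R) a x : In x l -> fold_right Rmin a l <= x.
Proof.
  induction l as [|b l IH]; simpl; [contradiction|intros [<-|H]].
  - apply Rmin_l.
  - eapply Rle_trans; [apply Rmin_r|apply IH; auto].
Qed.

Lemma max_theta_ge m theta i : (i < m)%nat -> theta i <= max_theta m theta.
Proof. intro. apply fold_right_Rmax_ge, in_map, in_seq. lia. Qed.

Lemma min_Delta_le m Delta i j :
  (i < m)%nat -> (j < m)%nat -> i <> j -> min_Delta m Delta <= Delta i j.
Proof.
  intros. apply fold_right_Rmin_le, in_flat_map. exists i. split; [apply in_seq; lia|].
  apply in_map, filter_In. split; [apply in_seq; lia|].
  destruct (Nat.eqb j i) eqn:E; [apply Nat.eqb_eq in E; lia|reflexivity].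
Qed.

(* [sqrt m >= 1 + K] with [K >= 0] gives [m >= (1 + K)^2 > 2 K]. *)
Lemma large_enough_margin m theta Delta :
  0 <= max_theta m theta -> large_enough m theta Delta ->
  2 * max_theta m theta < INR m * min_Delta m Delta.
Proof.
  intros HTh [HD Hsq].
  set (K := max_theta m theta / min_Delta m Delta) in Hsq.
  assert (HK : 0 <= K) by (unfold K, Rdiv; apply Rmult_le_pos; [|apply Rlt_le, Rinv_0_lt_compat]; auto).
  assert (HThK : max_theta m theta = K * min_Delta m Delta) by (unfold K; field; lra).
  assert (Hq2 := sqrt_sqrt (INR m) (pos_INR m)).
  assert (INR m > 2 * K) by nra.
  rewrite HThK. nra.
Qed.

Lemma goal_reached_in_coalition m theta Delta l i :
  (i < m)%nat -> theta i <= l i -> in_coalition m theta Delta l i.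
Proof.
  intros Hi Hl. exists 0%nat. unfold layer. simpl.
  apply andb_true_intro. split; [apply Nat.ltb_lt; auto|].
  unfold Rleb. destruct (Rle_dec _ _); auto.
Qed.

Section Jump.

Variables (m : nat) (theta : nat -> R) (Delta : nat -> nat -> R) (l a : nat -> R).
Hypothesis jump : jump_rule m theta Delta l a.

Local Notation C := (in_coalition m theta Delta l).

Lemma jump_rule_nonneg :
  cooperative m Delta -> (forall i, (i < m)%nat -> 0 <= l i) ->
  forall j, (j < m)%nat -> 0 <= a j.
Proof.
  intros Hcoop Hl j Hj. destruct (jump j Hj) as [Hin Hout].
  destruct (classic (C j)) as [Hc|Hc]; [rewrite (Hin Hc); lra|].
  rewrite (Hout Hc). apply Rplus_le_le_0_compat; [apply Hl; auto|].
  apply Rle_trans with (rsum m (fun _ => 0)); [rewrite rsum_const; lra|].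
  apply rsum_le. intros i Hi.
  destruct (excluded_middle_informative _) as [[_ Hij]|_]; [apply Hcoop; auto|lra].
Qed.

Lemma jump_rule_outsider_gain j :
  (j < m)%nat -> ~ C j -> l j + min_Delta m Delta * rsum m (indicator C) <= a j.
Proof.
  intros Hj Hcj. destruct (jump j Hj) as [_ Hout]. rewrite (Hout Hcj).
  apply Rplus_le_compat_l.
  replace (min_Delta m Delta * rsum m (indicator C)) with
    (rsum m (fun i => if excluded_middle_informative (C i) then min_Delta m Delta else 0))
    by (rewrite rsum_if; ring).
  apply rsum_le. intros i Hi.
  destruct (excluded_middle_informative (C i)) as [Hci|Hci];
  destruct (excluded_middle_informative (C i /\ i <> j)) as [[Hci' Hij]|Hx].
  - apply min_Delta_le; auto.
  - exfalso. apply Hx. split; auto. intros ->. contradiction.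
  - contradiction.
  - lra.
Qed.

Lemma jump_rule_sum_gain :
  2 * max_theta m theta <= INR m * min_Delta m Delta ->
  (forall j, (j < m)%nat -> 0 <= l j <= theta j) ->
  (forall j, (j < m)%nat -> a j <= theta j) ->
  (exists i, (i < m)%nat /\ theta i <= l i) ->
  (exists j, (j < m)%nat /\ ~ C j) ->
  rsum m l + (INR m * min_Delta m Delta - 2 * max_theta m theta) <= rsum m a.
Proof.
  intros Hmargin Hl Ha [i [Hi Hli]] [j0 [Hj0 Hcj0]].
  set (Dm := min_Delta m Delta) in *. set (Th := max_theta m theta) in *.
  set (c := rsum m (indicator C)).
  assert (Hc1 : 1 <= c).
  { apply rsum_indicator_ge1. exists i. split; auto. apply goal_reached_in_coalition; auto. }
  assert (HcTh : Dm * c <= Th).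
  { assert (H1 := jump_rule_outsider_gain j0 Hj0 Hcj0). fold Dm c in H1. assert (H2 := Ha j0 Hj0).
    assert (H3 := Hl j0 Hj0). assert (H4 := max_theta_ge m theta j0 Hj0). fold Th in H4. lra. }
  assert (Hsum : rsum m (fun j => l j + (if excluded_middle_informative (C j) then - Th else Dm * c))
                 <= rsum m a).
  { apply rsum_le. intros j Hj.
    destruct (excluded_middle_informative (C j)) as [Hcj|Hcj].
    - rewrite (proj1 (jump j Hj) Hcj).
      assert (H3 := Hl j Hj). assert (H4 := max_theta_ge m theta j Hj). fold Th in H4. lra.
    - apply jump_rule_outsider_gain; auto. }
  rewrite rsum_plus, rsum_if in Hsum. fold c in Hsum.
  assert (Dm * (INR m - c) - Th >= INR m * Dm - 2 * Th) by nra.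
  nra.
Qed.

End Jump.

Definition spike_free (spk : R -> Prop) (a b : R) : Prop :=
  forall t, a < t < b -> ~ spk t.

Definition left_limit_value (f : R -> R) (t : R) : R :=
  ClassicalEpsilon.epsilon (inhabits 0) (left_limit f t).

Lemma left_limit_value_spec f t :
  (exists l, left_limit f t l) -> left_limit f t (left_limit_value f t).
Proof. apply ClassicalEpsilon.epsilon_spec. Qed.

Lemma derivable_left_limit f t d : derivable_pt_lim f t d -> left_limit f t (f t).
Proof.
  intros Hd eps Heps.
  destruct (derivable_continuous_pt f t (exist _ d Hd) eps Heps) as [del [Hdel Hc]].
  exists del. split; auto. intros u Hu. apply (Hc u). split; [split; [exact I|lra]|].
  simpl. unfold R_dist. rewrite Rabs_left; lra.
Qed.

Lemma left_limit_witness f a b l eps :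
  a < b -> left_limit f b l -> eps > 0 -> exists u, a < u < b /\ Rabs (f u - l) < eps.
Proof.
  intros Hab HL Heps. destruct (HL eps Heps) as [d [Hd Hc]].
  assert (0 < Rmin d (b - a)) by (apply Rmin_glb_lt; lra).
  assert (Rmin d (b - a) <= d) by apply Rmin_l.
  assert (Rmin d (b - a) <= b - a) by apply Rmin_r.
  exists (b - Rmin d (b - a) / 2). split; [lra|]. apply Hc. lra.
Qed.

Lemma right_continuous_witness f a b eps :
  a < b -> right_continuous f a -> eps > 0 -> exists u, a < u < b /\ Rabs (f u - f a) < eps.
Proof.
  intros Hab Hr Heps. destruct (Hr eps Heps) as [d [Hd Hc]].
  assert (0 < Rmin d (b - a)) by (apply Rmin_glb_lt; lra).
  assert (Rmin d (b - a) <= d) by apply Rmin_l.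
  assert (Rmin d (b - a) <= b - a) by apply Rmin_r.
  exists (a + Rmin d (b - a) / 2). split; [lra|]. apply Hc. lra.
Qed.

Section Evolution.

Variables (m : nat) (theta v : nat -> R) (Delta : nat -> nat -> R).
Variables (s rate : nat -> R -> R) (spk : R -> Prop).

Hypothesis two_le_m : (2 <= m)%nat.
Hypothesis theta_pos : forall i, (i < m)%nat -> 0 < theta i.
Hypothesis v_pos : forall i, (i < m)%nat -> 0 < v i.
Hypothesis rate_gt : forall i t, (i < m)%nat -> s i t < theta i -> rate i t > v i.
Hypothesis coop : cooperative m Delta.
Hypothesis large : large_enough m theta Delta.
Hypothesis init_nonneg : forall i, (i < m)%nat -> 0 <= s i 0.
Hypothesis spike_pos : forall t, spk t -> 0 < t.
Hypothesis spikes_locally_finite :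
  forall T, exists ts : list R, forall t, spk t -> t <= T -> In t ts.
Hypothesis free_evolution :
  forall a b i, 0 <= a -> a < b -> (i < m)%nat -> spike_free spk a b ->
    right_continuous (s i) a /\ (forall t, a < t < b -> derivable_pt_lim (s i) t (rate i t)).
Hypothesis left_limits_exist :
  forall t i, 0 < t -> (i < m)%nat -> exists li, left_limit (s i) t li.
Hypothesis spike_iff_goal_reached :
  forall t l, 0 < t -> pre_levels m s t l -> (spk t <-> exists i, (i < m)%nat /\ theta i <= l i).
Hypothesis jump :
  forall t l, spk t -> pre_levels m s t l -> jump_rule m theta Delta l (fun j => s j t).

Section Quiet.

Variables (a b : R).
Hypotheses (a_nonneg : 0 <= a) (a_lt_b : a < b) (quiet : spike_free spk a b).

(* The levels are continuous inside a quiet interval, so reaching a goal there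
   would be a spike. *)
Lemma level_below_goal i u : (i < m)%nat -> a < u < b -> s i u < theta i.
Proof.
  intros Hi Hu. apply Rnot_le_lt; intro Hle. apply (quiet u Hu).
  apply (spike_iff_goal_reached u (fun k => s k u)); [lra| |exists i; auto].
  intros k Hk. apply derivable_left_limit with (rate k u).
  apply (proj2 (free_evolution a b k a_nonneg a_lt_b Hk quiet)). auto.
Qed.

Lemma level_growth i w u :
  (i < m)%nat -> a < w -> w < u -> u < b -> v i * (u - w) <= s i u - s i w.
Proof.
  intros Hi Hw Hwu Hub.
  destruct (MVT_cor2 (s i) (rate i) w u Hwu) as [c [Hc Hcwu]].
  { intros c Hc. apply (proj2 (free_evolution a b i a_nonneg a_lt_b Hi quiet)). lra. }
  assert (rate i c > v i) by (apply rate_gt, level_below_goal; auto; lra).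
  rewrite Hc. nra.
Qed.

Lemma level_ge_initial i u : (i < m)%nat -> a < u < b -> s i a <= s i u.
Proof.
  intros Hi Hu. apply Rnot_lt_le; intro Hlt.
  destruct (right_continuous_witness (s i) a u (s i a - s i u)) as [w [Hw Hc]];
    [lra|apply (free_evolution a b i); auto|lra|].
  apply Rabs_def2 in Hc.
  assert (Hg := level_growth i w u Hi ltac:(lra) ltac:(lra) ltac:(lra)).
  assert (0 < v i * (u - w)) by (apply Rmult_lt_0_compat; [apply v_pos|]; auto; lra).
  lra.
Qed.

Lemma left_limit_between i l :
  (i < m)%nat -> left_limit (s i) b l -> s i a <= l <= theta i.
Proof.
  intros Hi HL. split; apply Rnot_lt_le; intro Hlt.
  - destruct (left_limit_witness (s i) a b l (s i a - l)) as [u [Hu Hc]]; auto; [lra|].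
    apply Rabs_def2 in Hc. assert (s i a <= s i u) by (apply level_ge_initial; auto). lra.
  - destruct (left_limit_witness (s i) a b l (l - theta i)) as [u [Hu Hc]]; auto; [lra|].
    apply Rabs_def2 in Hc. assert (s i u < theta i) by (apply level_below_goal; auto). lra.
Qed.

End Quiet.

(* Otherwise level [0] would rise at speed [v 0] forever while staying below its goal. *)
Lemma spikes_unbounded T : exists t, T < t /\ spk t.
Proof.
  apply NNPP; intro Hno.
  set (a := Rmax T 0). assert (Ha : 0 <= a) by apply Rmax_r.
  assert (Hquiet : forall b, spike_free spk a b).
  { intros b t Ht Hst. apply Hno. exists t. split; auto. assert (H := Rmax_l T 0). fold a in H. lra. }
  assert (Hm : (0 < m)%nat) by lia. assert (Hv := v_pos 0 Hm).
  set (w := a + 1). set (q := Rabs (theta 0%nat - s 0%nat w) / v 0%nat). set (u := w + q + 1).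
  assert (Hq : 0 <= q) by (apply Rmult_le_pos; [apply Rabs_pos|apply Rlt_le, Rinv_0_lt_compat; lra]).
  assert (Hwu : a < w /\ w < u /\ u < u + 1) by (unfold u, w; lra).
  assert (Hgrow := level_growth a (u + 1) Ha ltac:(lra) (Hquiet (u + 1)) 0 w u Hm
    ltac:(lra) ltac:(lra) ltac:(lra)).
  assert (Hbelow := level_below_goal a (u + 1) Ha ltac:(lra) (Hquiet (u + 1)) 0 u Hm ltac:(lra)).
  assert (Hequ : v 0%nat * (u - w) = Rabs (theta 0%nat - s 0%nat w) + v 0%nat)
    by (unfold u, q; field; lra).
  assert (Habs := Rle_abs (theta 0%nat - s 0%nat w)). lra.
Qed.

Lemma next_spike t : exists t', t < t' /\ spk t' /\ spike_free spk t t'.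
Proof.
  destruct (spikes_unbounded t) as [t1 [Ht1 Hs1]]. destruct (spikes_locally_finite t1) as [ts Hts].
  destruct (list_min_witness ts (fun u => t < u /\ spk u)) as [y [_ [[Hty Hsy] Hmin]]].
  { exists t1. split; auto. apply Hts; auto; lra. }
  exists y. split; [|split]; auto. intros u Hu Hsu.
  assert (u <= t1).
  { apply Rnot_lt_le; intro. assert (y <= t1) by (apply Hmin; auto; apply Hts; auto; lra). lra. }
  assert (y <= u) by (apply Hmin; [apply Hts|split]; auto; lra). lra.
Qed.

Lemma previous_spike t :
  spike_free spk 0 t \/ exists p, 0 < p < t /\ spk p /\ spike_free spk p t.
Proof.
  destruct (classic (exists u, 0 < u < t /\ spk u)) as [[u [Hu Hsu]]|Hn].
  - right. destruct (spikes_locally_finite t) as [ts Hts].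
    destruct (list_max_witness ts (fun u => 0 < u < t /\ spk u)) as [y [_ [[Hyt Hsy] Hmax]]].
    { exists u. split; auto. apply Hts; auto; lra. }
    exists y. split; [|split]; auto. intros z Hz Hsz.
    assert (z <= y) by (apply Hmax; [apply Hts|split]; auto; lra). lra.
  - left. intros u Hu Hsu. apply Hn. eauto.
Qed.

Local Notation pre t := (fun i => left_limit_value (s i) t).

Lemma pre_levels_chosen t : 0 < t -> pre_levels m s t (pre t).
Proof. intros Ht i Hi. apply left_limit_value_spec, left_limits_exist; auto. Qed.

Lemma post_level_bounds t t' l' j :
  spk t -> t < t' -> spike_free spk t t' -> pre_levels m s t' l' -> (j < m)%nat ->
  s j t <= l' j <= theta j.
Proof.
  intros Ht Htt' Hq Hl' Hj. apply left_limit_between with t'; auto.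
  apply Rlt_le, spike_pos; auto.
Qed.

Lemma pre_level_le_goal t l i :
  spk t -> pre_levels m s t l -> (i < m)%nat -> l i <= theta i.
Proof.
  intros Ht Hl Hi. assert (Htp := spike_pos t Ht).
  destruct (previous_spike t) as [Hq|[p [Hp [Hsp Hq]]]].
  - apply (left_limit_between 0 t); auto; lra.
  - apply (left_limit_between p t); auto; lra.
Qed.

(* A first spike with a negative pre-level is impossible: the levels start
   nonnegative and jumps preserve nonnegativity. *)
Lemma pre_levels_nonneg t l i :
  spk t -> pre_levels m s t l -> (i < m)%nat -> 0 <= l i.
Proof.
  intros Ht Hl Hi. apply Rnot_lt_le; intro Hneg.
  set (bad u := spk u /\ exists l', pre_levels m s u l' /\ exists k, (k < m)%nat /\ l' k < 0).
  destruct (spikes_locally_finite t) as [ts Hts].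
  destruct (list_min_witness ts bad) as [y [_ [[Hy [ly [Hly [k [Hk Hlyk]]]]] Hmin]]].
  { exists t. split; [apply Hts; auto; lra|]. split; eauto. }
  assert (Hyp := spike_pos y Hy).
  assert (Hyt : y <= t) by (apply Hmin; [apply Hts; auto; lra|split; eauto]).
  destruct (previous_spike y) as [Hq|[p [Hp [Hsp Hq]]]].
  - assert (H := left_limit_between 0 y ltac:(lra) Hyp Hq k (ly k) Hk (Hly k Hk)).
    assert (H0 := init_nonneg k Hk). lra.
  - assert (Hpre_p : forall i, (i < m)%nat -> 0 <= left_limit_value (s i) p).
    { intros i' Hi'. apply Rnot_lt_le. intro Hlt.
      assert (y <= p) by (apply Hmin; [apply Hts; auto; lra|split; [|exists (pre p); split;
        [apply pre_levels_chosen; lra|eauto]]]; auto).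
      lra. }
    assert (Hpost := jump_rule_nonneg m theta Delta _ _ (jump p (pre p) Hsp
      (pre_levels_chosen p ltac:(lra))) coop Hpre_p k Hk).
    assert (H := post_level_bounds p y ly k Hsp ltac:(lra) Hq Hly Hk). lra.
Qed.

Lemma network_margin : 2 * max_theta m theta < INR m * min_Delta m Delta.
Proof.
  apply large_enough_margin; auto.
  apply Rle_trans with (theta 0%nat); [apply Rlt_le, theta_pos|apply max_theta_ge]; lia.
Qed.

Lemma pre_level_sum_step t t' :
  spk t -> t < t' -> spike_free spk t t' ->
  (exists j, (j < m)%nat /\ ~ in_coalition m theta Delta (pre t) j) ->
  rsum m (pre t) + (INR m * min_Delta m Delta - 2 * max_theta m theta) <= rsum m (pre t').
Proof.
  intros Ht Htt' Hq Hout. assert (Htp := spike_pos t Ht).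
  assert (Hl' := pre_levels_chosen t' ltac:(lra)).
  apply Rle_trans with (rsum m (fun j => s j t)).
  - apply jump_rule_sum_gain.
    + apply jump, pre_levels_chosen; auto.
    + apply Rlt_le, network_margin.
    + intros j Hj. split; [apply (pre_levels_nonneg t (pre t))|apply (pre_level_le_goal t (pre t))];
        auto using pre_levels_chosen.
    + intros j Hj. destruct (post_level_bounds t t' (pre t') j); auto; lra.
    + apply (spike_iff_goal_reached t); auto using pre_levels_chosen.
    + exact Hout.
  - apply rsum_le. intros j Hj. destruct (post_level_bounds t t' (pre t') j); auto.
Qed.

Lemma grand_coalition_recurs T :
  exists t, T < t /\ spk t /\ forall j, (j < m)%nat -> in_coalition m theta Delta (pre t) j.
Proof.
  apply NNPP; intro Hno.
  set (delta := INR m * min_Delta m Delta - 2 * max_theta m theta).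
  assert (Hdelta : 0 < delta) by (unfold delta; assert (H := network_margin); lra).
  assert (Hgrow : forall k : nat, exists t, T < t /\ spk t /\ INR k * delta <= rsum m (pre t)).
  { induction k as [|k [t [HTt [Ht Hk]]]].
    - destruct (spikes_unbounded T) as [t [HTt Ht]]. exists t. split; [|split]; auto.
      rewrite Rmult_0_l. apply Rle_trans with (rsum m (fun _ => 0)); [rewrite rsum_const; lra|].
      apply rsum_le. intros i Hi. apply (pre_levels_nonneg t (pre t)); auto.
      apply pre_levels_chosen, spike_pos; auto.
    - destruct (next_spike t) as [t' [Htt' [Ht' Hq]]].
      exists t'. split; [lra|split]; auto.
      assert (Hout : exists j, (j < m)%nat /\ ~ in_coalition m theta Delta (pre t) j).
      { apply NNPP; intro Hall. apply Hno. exists t. split; [|split]; auto.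
        intros j Hj. apply NNPP; eauto. }
      assert (H := pre_level_sum_step t t' Ht Htt' Hq Hout). rewrite S_INR. fold delta in H. lra. }
  destruct (INR_archimed delta (rsum m theta) Hdelta) as [k Hk].
  destruct (Hgrow k) as [t [_ [Ht Hkt]]].
  assert (rsum m (pre t) <= rsum m theta).
  { apply rsum_le. intros i Hi. apply (pre_level_le_goal t (pre t)); auto.
    apply pre_levels_chosen, spike_pos; auto. }
  lra.
Qed.

End Evolution.

Theorem theorem1
  (m : nat) (X : nat -> Type)
  (S : forall i, X i -> R)     (* satisfaction levels S_i *)
  (L : forall i, X i -> R)     (* L_i x = grad S_i(x) . f_i(x) *)
  (theta v : nat -> R) (Delta : nat -> nat -> R)
  (x : forall i, R -> X i) (spk : R -> Prop) :
  (2 <= m)%nat ->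
  (forall i, (i < m)%nat -> 0 < theta i) ->
  (forall i, (i < m)%nat -> 0 < v i) ->
  (forall i (y : X i), (i < m)%nat -> S i y < theta i -> L i y > v i) ->
  cooperative m Delta ->
  large_enough m theta Delta ->
  (forall i, (i < m)%nat -> 0 <= S i (x i 0) < theta i) ->
  is_evolution m X S L theta Delta x spk ->
  forall T : R, exists t, T < t /\ spk t /\
    exists l : nat -> R,
      pre_levels m (fun i u => S i (x i u)) t l /\
      forall j, (j < m)%nat -> in_coalition m theta Delta l j.
Proof.
  intros Hm Htheta Hv Hrate Hcoop Hlarge Hinit
    [Hpos [Hfinite [Hfree [Hleft [Hspike Hjump]]]]] T.
  set (s := fun i u => S i (x i u)).
  destruct (grand_coalition_recurs m theta v Delta s (fun i u => L i (x i u)) spk)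
    with (T := T) as [t [HTt [Ht Hgrand]]]; auto.
  - intros i Hi. apply Hinit; auto.
  - exists t. split; [|split]; auto. exists (fun i => left_limit_value (s i) t). split; auto.
    intros i Hi. apply left_limit_value_spec, Hleft; auto.
Qed.
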